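(* Let $\mathcal{L}=(\mathrm{Fm},\vdash)$ be a selfextensional logic and let $S(P,N)$ denote a static positive permission system $S^{(\mathrm{R})}(P,N)$ (for a fixed rule (R)) or $S^i(P,N)$ (for a fixed $1\le i\le4$). For every $P,N\subseteq\mathrm{Fm}\times\mathrm{Fm}$, $S(P,N)\subseteq_c P_N$ if and only if $P$ and $N$ are cross-coherent (with respect to the same choice of $S$).
   Context: $Cn(\Gamma)=\{\psi\mid\Gamma\vdash\psi\}$, $Cn(\alpha)=Cn(\{\alpha\})$, $Cn(\varphi,\psi)=Cn(\{\varphi,\psi\})$. Normative systems and permission systems are relations $\subseteq\mathrm{Fm}\times\mathrm{Fm}$. For a rule (R) on relations, $N^{(\mathrm{R})}$ is the smallest extension of $N$ closed under (R), and $N^{(\mathrm{R})}_{(\alpha,\varphi)}$ the smallest extension of $N\cup\{(\alpha,\varphi)\}$ closed under (R); $N^i$, $N^i_{(\alpha,\varphi)}$ likewise for the rule sets $i=1$: $(\top)$,(SI),(WO),(AND); $i=2$: these plus (OR); $i=3$: $(\top)$,(SI),(WO),(AND),(CT); $i=4$: all six (rules: $(\top)$: $(\top,\top)$; (SI): from $(\alpha,\varphi)$ and $\beta\vdash\alpha$ infer $(\beta,\varphi)$; (WO): from $(\alpha,\varphi)$ and $\varphi\vdash\psi$ infer $(\alpha,\psi)$; (AND): from $(\alpha,\varphi),(\alpha,\psi)$ infer $(\alpha,\varphi\wedge\psi)$; (OR): from $(\alpha,\varphi),(\beta,\varphi)$ infer $(\alpha\vee\beta,\varphi)$; (CT): from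 $(\alpha,\varphi),(\alpha\wedge\varphi,\psi)$ infer $(\alpha,\psi)$). Static positive permission: $S^{(\mathrm{R})}(P,N)=\bigcup\{N^{(\mathrm{R})}_{(\alpha,\varphi)}\mid(\alpha,\varphi)\in P\}$ if $P\neq\varnothing$ and $N^{(\mathrm{R})}$ otherwise; $S^i(P,N)$ likewise with $N^i$. $P_N=\{(\alpha,\varphi)\mid\forall\psi((\alpha,\psi)\in N\Rightarrow Cn(\varphi,\psi)\neq\mathrm{Fm})\}$. $M\subseteq_c M'$ means $(\alpha,\varphi)\in M$ and $Cn(\alpha)\neq\mathrm{Fm}$ imply $(\alpha,\varphi)\in M'$. $N$ and $P$ are cross-incoherent if there are $\gamma,\varphi,\psi$ with $(\gamma,\varphi)\in N$, $(\gamma,\psi)\in S(P,N)$, $Cn(\gamma)\neq\mathrm{Fm}$ and $Cn(\varphi,\psi)=\mathrm{Fm}$; cross-coherent otherwise. *)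

From Stdlib Require Import List.
Import ListNotations.

Set Implicit Arguments.

(** * Formulas: a propositional language containing ⊤, ∧, ∨, plus arbitrary
    further connectives (symbols of type [O] applied to argument lists). *)
Inductive fm (O : Type) : Type :=
  | Var : nat -> fm O
  | Top : fm O
  | And : fm O -> fm O -> fm O
  | Or  : fm O -> fm O -> fm O
  | App : O -> list (fm O) -> fm O.

Arguments Var {O} _.
Arguments Top {O}.

Fixpoint subst {O : Type} (s : nat -> fm O) (f : fm O) : fm O :=
  match f with
  | Var n => s n
  | Top => Top
  | And a b => And (subst s a) (subst s b)
  | Or a b => Or (subst s a) (subst s b)
  | App o l => App o (map (subst s) l)
  end.

Definition subst1 {O : Type} (p : nat) (a : fm O) : nat -> fm O :=
  fun n => if Nat.eqb n p then a else Var n.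

Definition fset (O : Type) := fm O -> Prop.
Definition cons_rel (O : Type) := fset O -> fm O -> Prop.

Definition sing {O} (a : fm O) : fset O := fun x => x = a.
Definition pair {O} (a b : fm O) : fset O := fun x => x = a \/ x = b.

Record is_logic {O : Type} (vd : cons_rel O) : Prop := {
  lg_refl : forall (G : fset O) a, G a -> vd G a;
  lg_mono : forall (G D : fset O) a, (forall x, G x -> D x) -> vd G a -> vd D a;
  lg_cut  : forall (G D : fset O) a,
      (forall x, D x -> vd G x) -> vd D a -> vd G a;
  lg_struct : forall (G : fset O) a (s : nat -> fm O),
      vd G a -> vd (fun y => exists x, G x /\ y = subst s x) (subst s a)
}.

Definition Cn_full {O} (vd : cons_rel O) (G : fset O) : Prop := forall x, vd G x.

Definition interder {O} (vd : cons_rel O) (a b : fm O) : Prop :=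
  forall x, vd (sing a) x <-> vd (sing b) x.

(** Selfextensional: interderivability is a congruence of the formula
    algebra, i.e. preserved by replacing a variable in any context. *)
Definition selfextensional {O} (vd : cons_rel O) : Prop :=
  forall (a b : fm O), interder vd a b ->
    forall (d : fm O) (p : nat),
      interder vd (subst (subst1 p a) d) (subst (subst1 p b) d).

Definition frel (O : Type) := fm O -> fm O -> Prop.

Inductive rule := RTop | RSI | RWO | RAND | ROR | RCT.

Inductive closure {O} (vd : cons_rel O) (rs : rule -> Prop) (N : frel O)
  : fm O -> fm O -> Prop :=
  | cl_base a f : N a f -> closure vd rs N a f
  | cl_top : rs RTop -> closure vd rs N Top Top
  | cl_si a f b : rs RSI -> closure vd rs N a f -> vd (sing b) a ->
      closure vd rs N b f
  | cl_wo a f g : rs RWO -> closure vd rs N a f -> vd (sing f) g ->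
      closure vd rs N a g
  | cl_and a f g : rs RAND -> closure vd rs N a f -> closure vd rs N a g ->
      closure vd rs N a (And f g)
  | cl_or a b f : rs ROR -> closure vd rs N a f -> closure vd rs N b f ->
      closure vd rs N (Or a b) f
  | cl_ct a f g : rs RCT -> closure vd rs N a f ->
      closure vd rs N (And a f) g -> closure vd rs N a g.

(** Choice of the static permission operator: S^{(R)} for a single rule R,
    or S^i for i = 1..4. *)
Inductive sys := SysR (r : rule) | SysI1 | SysI2 | SysI3 | SysI4.

Definition sys_rules (s : sys) : rule -> Prop :=
  match s with
  | SysR r => fun r' => r' = r
  | SysI1 => fun r => r = RTop \/ r = RSI \/ r = RWO \/ r = RAND
  | SysI2 => fun r => r = RTop \/ r = RSI \/ r = RWO \/ r = RAND \/ r = ROR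
  | SysI3 => fun r => r = RTop \/ r = RSI \/ r = RWO \/ r = RAND \/ r = RCT
  | SysI4 => fun _ => True
  end.

Definition add_pair {O} (N : frel O) (a f : fm O) : frel O :=
  fun x y => N x y \/ (x = a /\ y = f).

Definition Sperm {O} (vd : cons_rel O) (s : sys) (P N : frel O) : frel O :=
  fun x y =>
    ((exists a f, P a f) /\
       exists a f, P a f /\ closure vd (sys_rules s) (add_pair N a f) x y)
    \/ ((forall a f, ~ P a f) /\ closure vd (sys_rules s) N x y).

Definition PN {O} (vd : cons_rel O) (N : frel O) : frel O :=
  fun a f => forall g, N a g -> ~ Cn_full vd (pair f g).

Definition subc {O} (vd : cons_rel O) (M M' : frel O) : Prop :=
  forall a f, M a f -> ~ Cn_full vd (sing a) -> M' a f.

Definition cross_incoherent {O} (vd : cons_rel O) (s : sys) (P N : frel O) : Prop :=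
  exists g f h, N g f /\ Sperm vd s P N g h /\ ~ Cn_full vd (sing g)
                /\ Cn_full vd (pair f h).

Definition cross_coherent {O} (vd : cons_rel O) (s : sys) (P N : frel O) : Prop :=
  ~ cross_incoherent vd s P N.


(* Both sides say the same thing about S(P,N): no permitted (γ,ψ) with
   consistent γ clashes with an obligation (γ,φ) of N.  They differ only in
   writing the clash as Cn(ψ,φ) = Fm or as Cn(φ,ψ) = Fm, which agree because
   {ψ,φ} and {φ,ψ} are the same premise set. *)

Lemma Cn_full_pairC {O : Type} {vd : cons_rel O} (Hlog : is_logic vd)
  {a b : fm O} : Cn_full vd (pair a b) -> Cn_full vd (pair b a).
Proof.
  intros Hab x.
  apply (lg_mono Hlog (pair a b)); [| apply Hab].
  intros y [-> | ->]; [right | left]; reflexivity.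
Qed.

Lemma subc_PN_iff_no_clash {O : Type} {vd : cons_rel O} (Hlog : is_logic vd)
  (M N : frel O) :
  subc vd M (PN vd N) <->
  ~ (exists g f h, N g f /\ M g h /\ ~ Cn_full vd (sing g)
                   /\ Cn_full vd (pair f h)).
Proof.
  split.
  - intros Hsub [g [f [h [HNgf [HMgh [Hg Hfh]]]]]].
    exact (Hsub g h HMgh Hg f HNgf (Cn_full_pairC Hlog Hfh)).
  - intros Hnoclash a f HMaf Ha g HNag Hfg.
    apply Hnoclash.
    exists a, g, f.
    repeat split; [exact HNag | exact HMaf | exact Ha |].
    exact (Cn_full_pairC Hlog Hfg).
Qed.

Theorem proposition4p12 (O : Type) (vd : cons_rel O)
  (Hlog : is_logic vd) (Hse : selfextensional vd)
  (s : sys) (P N : frel O) :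
  subc vd (Sperm vd s P N) (PN vd N) <-> cross_coherent vd s P N.
Proof.
  exact (subc_PN_iff_no_clash Hlog (Sperm vd s P N) N).
Qed.
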